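(* For $e\in\mathbf{I}_n(\underline{12}0)$ define its parameters $(p,q)$ by $p=|\{k: e_1\ldots e_nk\in\mathbf{I}_{n+1}(\underline{12}0),\ k>e_n\}|=n-e_n$ and $q=|\{k: e_1\ldots e_nk\in\mathbf{I}_{n+1}(\underline{12}0),\ k\le e_n\}|$. Then the unique element of $\mathbf{I}_1(\underline{12}0)$ has parameters $(1,1)$, and for every $e\in\mathbf{I}_n(\underline{12}0)$ with parameters $(p,q)$, the multiset of parameters of the sequences $e_1\ldots e_nk\in\mathbf{I}_{n+1}(\underline{12}0)$ (over all admissible $k$) is $$\{(p,2),(p-1,3),\ldots,(1,p+1),\ (p+1,q),(p+2,q-1),\ldots,(p+q,1)\}.$$ That is, $\underline{12}0$-avoiding inversion sequences grow according to the succession rule with root $(1,1)$ and $(p,q)\leadsto (p,2),(p-1,3),\ldots,(1,p+1),(p+1,q),(p+2,q-1),\ldots,(p+q,1)$.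
   Context: An inversion sequence of length $n$ is $e=e_1\ldots e_n$ with $0\le e_i<i$; $\mathbf{I}_n$ is their set. $\mathbf{I}_n(\underline{12}0)$ is the set of $e\in\mathbf{I}_n$ with no indices $2\le i<j\le n$ such that $e_j<e_{i-1}<e_i$. *)

(* Inversion sequences are represented as [seq nat], 0-indexed:
   e = e_1 ... e_n is the list [:: e_1; ...; e_n], so nth 0 e i = e_{i+1}. *)
From mathcomp Require Import all_boot.
Set Implicit Arguments. Unset Strict Implicit. Unset Printing Implicit Defensive.

(* e is an inversion sequence: 0 <= e_i < i, i.e. (0-indexed) nth 0 e i <= i. *)
Definition is_inv (e : seq nat) : bool :=
  all (fun i => nth 0 e i <= i) (iota 0 (size e)).

(* e avoids the vincular pattern 12_0 (underlined 12): there are no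
   indices 2 <= i < j <= n (1-indexed) with e_j < e_{i-1} < e_i.
   0-indexed: no a, j with a+1 < j < size e and e[j] < e[a] < e[a+1]. *)
Definition avoids120 (e : seq nat) : bool :=
  all (fun a =>
         all (fun j => ~~ ((nth 0 e j < nth 0 e a) && (nth 0 e a < nth 0 e a.+1)))
             (iota a.+2 (size e - a.+2)))
      (iota 0 (size e)).

Definition I120 (n : nat) (e : seq nat) : bool :=
  [&& size e == n, is_inv e & avoids120 e].

(* the admissible k with e_1 ... e_n k in I_{n+1}(12_0)
   (any such k satisfies k <= n, so iota 0 n.+1 covers all candidates) *)
Definition children (e : seq nat) : seq nat :=
  [seq k <- iota 0 (size e).+1 | I120 (size e).+1 (rcons e k)].

Definition params (e : seq nat) : nat * nat :=
  (count (fun k => last 0 e < k) (children e),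
   count (fun k => k <= last 0 e) (children e)).

(* Appending k to e in I_n(12_0) keeps it 12_0-avoiding exactly when k is
   at least m(e), the largest bottom e_a of an ascent e_a < e_{a+1} (0 if there
   is none), and avoidance forces m(e) <= e_n. So the children of e are the
   k with m(e) <= k <= n, whence p = n - e_n and q = e_n + 1 - m(e). A child
   k <= e_n creates no new ascent and keeps m, while a child k > e_n creates
   the ascent e_n < k and has m = e_n; this yields the two runs of the rule. *)
From mathcomp Require Import all_boot.
From mathcomp Require Import zify.
Set Implicit Arguments. Unset Strict Implicit.

Definition ascent_max (e : seq nat) : nat :=
  \max_(a < (size e).-1 | nth 0 e a < nth 0 e a.+1) nth 0 e a.

Lemma is_invP e : reflect (forall i, i < size e -> nth 0 e i <= i) (is_inv e).
Proof.
apply: (iffP allP) => inv_e i.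
- by move=> lt_i; apply: inv_e; rewrite mem_iota.
- by rewrite mem_iota => /andP[_ lt_i]; apply: inv_e.
Qed.

Lemma avoids120P e :
  reflect (forall a j, a.+1 < j < size e ->
             ~~ ((nth 0 e j < nth 0 e a) && (nth 0 e a < nth 0 e a.+1)))
          (avoids120 e).
Proof.
apply: (iffP allP) => [avoid_e a j /andP[lt_aj lt_j] | avoid_e a _].
- have a_in : a \in iota 0 (size e) by rewrite mem_iota; lia.
  by move/allP: (avoid_e a a_in); apply; rewrite mem_iota; lia.
- by apply/allP => j; rewrite mem_iota => range_j; apply: avoid_e; lia.
Qed.

Lemma is_inv_rcons e k : is_inv (rcons e k) = is_inv e && (k <= size e).
Proof.
apply/is_invP/andP => [inv_ek | [/is_invP inv_e le_k] i].
- split; last by have := inv_ek (size e); rewrite nth_rcons ltnn eqxx size_rcons; apply.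
  by apply/is_invP => i lt_i; have := inv_ek i; rewrite nth_rcons lt_i size_rcons; apply; lia.
- rewrite size_rcons ltnS leq_eqVlt nth_rcons => /orP[/eqP-> | lt_i].
    by rewrite ltnn eqxx.
  by rewrite lt_i; apply: inv_e.
Qed.

Lemma avoids120_rcons e k :
  avoids120 (rcons e k) = avoids120 e && (ascent_max e <= k).
Proof.
apply/avoids120P/andP => [avoid_ek | [/avoids120P avoid_e /bigmax_leqP asc_le_k]].
- split.
    apply/avoids120P => a j /andP[lt_aj lt_j].
    have := avoid_ek a j; rewrite size_rcons !nth_rcons lt_j.
    by rewrite !ifT; [apply; lia | lia | lia].
  apply/bigmax_leqP => -[a lt_a] /= asc_a.
  have := avoid_ek a (size e); rewrite size_rcons !nth_rcons ltnn eqxx.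
  by rewrite !ifT ?asc_a ?andbT -?leqNgt; [apply; lia | lia | lia].
- move=> a j /andP[lt_aj]; rewrite size_rcons ltnS => le_j.
  have lt_a1 : a.+1 < size e by lia.
  rewrite !nth_rcons lt_a1 (ltnW lt_a1).
  case: (ltngtP j (size e)) le_j => // [lt_j _ | _ _]; first by apply: avoid_e; lia.
  apply/negP => /andP[lt_k asc_a].
  have lt_a : a < (size e).-1 by lia.
  by have := asc_le_k (Ordinal lt_a) asc_a; rewrite /= leqNgt lt_k.
Qed.

Lemma I120_rcons n e k :
  I120 n e -> I120 n.+1 (rcons e k) = (ascent_max e <= k <= n).
Proof.
case/and3P=> /eqP size_e inv_e avoid_e.
rewrite /I120 size_rcons size_e eqxx is_inv_rcons avoids120_rcons inv_e avoid_e.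
by rewrite size_e /= andbC.
Qed.

Lemma ascent_max_le_last n e : I120 n e -> ascent_max e <= last 0 e.
Proof.
case/and3P=> _ _ /avoids120P avoid_e; apply/bigmax_leqP => -[a lt_a] /= asc_a.
rewrite -nth_last; case: (ltngtP a.+1 (size e).-1) => [lt_a1 | gt_a1 | <-].
- by have := avoid_e a (size e).-1; rewrite asc_a andbT -leqNgt; apply; lia.
- lia.
- exact: ltnW.
Qed.

Lemma last_lt_I120 n e : 0 < n -> I120 n e -> last 0 e < n.
Proof.
move=> n_gt0 /and3P[/eqP size_e /is_invP inv_e _].
by rewrite -nth_last; apply: (leq_ltn_trans (inv_e _ _)); lia.
Qed.

Lemma ascent_max_rcons e k : 0 < size e ->
  ascent_max (rcons e k) = maxn (ascent_max e) (if last 0 e < k then last 0 e else 0).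
Proof.
case size_e: (size e) => [// | n] _.
rewrite /ascent_max size_rcons size_e /= big_mkcond big_ord_recr /= -big_mkcond.
have nth_n : nth 0 (rcons e k) n = last 0 e by rewrite nth_rcons size_e ltnSn -nth_last size_e.
rewrite nth_n nth_rcons size_e ltnn eqxx; congr maxn.
apply: eq_big => [a | a _] /=; have lt_a := ltn_ord a.
  by rewrite !nth_rcons size_e !ifT //; lia.
by rewrite nth_rcons size_e ifT //; lia.
Qed.

Lemma filter_iota_geq m n : m <= n -> [seq k <- iota 0 n | m <= k] = iota m (n - m).
Proof.
move=> le_mn; rewrite -{1}(subnKC le_mn) iotaD filter_cat add0n.
rewrite (@eq_in_filter _ _ pred0 (iota 0 m)) ?filter_pred0; last first.
  by move=> k; rewrite mem_iota /=; lia.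
by rewrite (@eq_in_filter _ _ predT) ?filter_predT // => k; rewrite mem_iota /=; lia.
Qed.

Lemma children_I120 n e : 0 < n -> I120 n e ->
  children e = iota (ascent_max e) ((last 0 e).+1 - ascent_max e)
               ++ iota (last 0 e).+1 (n - last 0 e).
Proof.
move=> n_gt0 e120; have size_e : size e = n by case/and3P: e120 => /eqP.
have le_m_last := ascent_max_le_last e120; have lt_last := last_lt_I120 n_gt0 e120.
rewrite /children size_e (@eq_in_filter _ _ (fun k => ascent_max e <= k)); last first.
  by move=> k; rewrite mem_iota add0n ltnS I120_rcons // => /andP[_ ->]; rewrite andbT.
rewrite filter_iota_geq; last lia.
have -> : n.+1 - ascent_max e = ((last 0 e).+1 - ascent_max e) + (n - last 0 e) by lia.
by rewrite iotaD; congr (_ ++ iota _ _); lia.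
Qed.

Lemma count_iota_const (a : pred nat) (b : bool) m n :
  {in iota m n, a =1 fun=> b} -> count a (iota m n) = b * n.
Proof.
move/eq_in_count->; case: b => /=; rewrite ?mul1n ?mul0n.
- by rewrite -[n in RHS](size_iota m); apply: count_predT.
- exact: count_pred0.
Qed.

Lemma params_I120 n e : 0 < n -> I120 n e ->
  params e = (n - last 0 e, (last 0 e).+1 - ascent_max e).
Proof.
move=> n_gt0 e120; have le_m_last := ascent_max_le_last e120.
rewrite /params (children_I120 n_gt0 e120) !count_cat.
congr (_, _).
- rewrite (@count_iota_const _ false) ?(@count_iota_const _ true) => [|k|k];
    rewrite ?mem_iota /=; lia.
- rewrite (@count_iota_const _ true) ?(@count_iota_const _ false) => [|k|k];
    rewrite ?mem_iota /=; lia.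
Qed.

Lemma params_rcons_I120 n e k : 0 < n -> I120 n e -> ascent_max e <= k <= n ->
  params (rcons e k) =
    (n.+1 - k, k.+1 - (if last 0 e < k then last 0 e else ascent_max e)).
Proof.
move=> n_gt0 e120 range_k; have le_m_last := ascent_max_le_last e120.
have size_e : 0 < size e by case/and3P: e120 => /eqP->.
rewrite (params_I120 _ (_ : I120 n.+1 (rcons e k))) ?I120_rcons //.
by rewrite last_rcons ascent_max_rcons //; case: ifP; rewrite ?maxn0 ?(maxn_idPr le_m_last).
Qed.

Lemma rev_iota m n : rev (iota m n) = [seq m + n - i | i <- iota 1 n].
Proof.
elim: n => [|n IHn] //.
rewrite -[in LHS]addn1 iotaD cats1 rev_rcons IHn /= -[2]/(1 + 1) iotaDl -map_comp.
by congr (_ :: _); [lia | apply: eq_map => i /=; lia].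
Qed.

Lemma perm_eq_map_in (S T : eqType) (f g : S -> T) s :
  {in s, f =1 g} -> perm_eq (map f s) (map g s).
Proof. by move/eq_in_map->. Qed.

Lemma I120_1 e : I120 1 e = (e == [:: 0]).
Proof. by case: e => [|[|x] [|y s]]. Qed.

Theorem proposition3p3 :
  (forall e : seq nat, I120 1 e -> e = [:: 0] /\ params e = (1, 1)) /\
  (I120 1 [:: 0]) /\
  (forall (n : nat) (e : seq nat), 1 <= n -> I120 n e ->
     let p := (params e).1 in
     let q := (params e).2 in
     p = n - last 0 e /\
     perm_eq [seq params (rcons e k) | k <- children e]
             ([seq (p + 1 - i, i + 1) | i <- iota 1 p] ++
              [seq (p + i, q + 1 - i) | i <- iota 1 q])).
Proof.
split; first by move=> e; rewrite I120_1 => /eqP->.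
split; first by [].
move=> n e n_gt0 e120 p q; have le_m_last := ascent_max_le_last e120.
have lt_last := last_lt_I120 n_gt0 e120.
have [p_eq q_eq] : p = n - last 0 e /\ q = (last 0 e).+1 - ascent_max e.
  by rewrite /p /q (params_I120 n_gt0 e120).
split=> //; rewrite (children_I120 n_gt0 e120) map_cat perm_catC; apply: perm_cat.
- rewrite p_eq -(addn1 (last 0 e)) iotaDl -map_comp.
  apply: perm_eq_map_in => i; rewrite mem_iota => range_i /=.
  by rewrite (params_rcons_I120 n_gt0 e120) ?ifT; [congr pair; lia | lia | lia].
- rewrite -perm_rev -map_rev rev_iota q_eq -map_comp.
  apply: perm_eq_map_in => i; rewrite mem_iota => range_i /=.
  by rewrite (params_rcons_I120 n_gt0 e120) ?ifF; [congr pair; lia | lia | lia].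
Qed.
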